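(* Let $(\nu_l)_{l\ge1}$ be probability measures on $(X,\mathcal{A})$, and $R_l:X\to\mathfrak{E}$, $R_l':X\to\mathfrak{E}'$, $l\ge1$, Borel maps into compact metric spaces $\mathfrak{E}$ and $\mathfrak{E}'$. Let $(R,R')$ be a random element of $\mathfrak{E}\times\mathfrak{E}'$ such that $(R_l,R_l')\overset{\nu_l}{\Longrightarrow}(R,R')$ as $l\to\infty$. Assume there is a $\pi$-system $\mathcal{B}^\pi_{\mathfrak{E}}$ generating the Borel $\sigma$-algebra of $\mathfrak{E}$ such that for all $E\in\mathcal{B}^\pi_{\mathfrak{E}}$ we have $\Pr[R\in\partial E]=0$ and, in case $\Pr[R\in E]>0$, $R_l'\overset{(\nu_l)_{\{R_l\in E\}}}{\Longrightarrow}R'$ as $l\to\infty$. Then $R$ and $R'$ are independent.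
   Context: $\nu_B:=\nu(B\cap\cdot)/\nu(B)$ denotes the conditional measure. $R_l\overset{\nu_l}{\Longrightarrow}R$ means the laws $\nu_l\circ R_l^{-1}$ converge weakly to the law of $R$. $\partial E$ is the topological boundary. *)

From HB Require Import structures.
From mathcomp Require Import all_boot all_order all_algebra.
From mathcomp Require Import all_classical all_reals all_analysis.
Set Implicit Arguments. Unset Strict Implicit. Unset Printing Implicit Defensive.
Import Order.TTheory GRing.Theory Num.Theory.
Import numFieldNormedType.Exports.
Local Open Scope classical_set_scope.
Local Open Scope ring_scope.

Definition Borel (T : topologicalType) : set (set T) := <<s [set: T], open >>.

Definition boundary (T : topologicalType) (A : set T) : set T :=
  closure A `\` interior A.

Definition borel_map d (Y : measurableType d) (T : topologicalType)
  (f : Y -> T) : Prop :=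
  forall B, Borel B -> measurable (f @^-1` B).

Definition bounded_continuous (R : realType) (T : topologicalType)
  (f : T -> R) : Prop :=
  continuous f /\ exists M : R, forall t, `|f t| <= M.

(* S_l ==>^{nu_l} S : the laws nu_l o S_l^{-1} converge weakly to the law
   P o S^{-1}, i.e. for every bounded continuous f,
   int f d(nu_l o S_l^{-1}) = int f(S_l) dnu_l  -->  int f(S) dP. *)
Definition weak_conv_law (R : realType) d (X : measurableType d)
  d' (Om : measurableType d') (T : topologicalType)
  (nu : nat -> probability X R) (S : nat -> X -> T)
  (P : probability Om R) (S0 : Om -> T) : Prop :=
  forall f : T -> R, bounded_continuous f ->
    (fun l => (\int[nu l]_x (f (S l x))%:E)%E) @ \oo -->
      (\int[P]_w (f (S0 w))%:E)%E.

(* Conditional version: S_l ==>^{(nu_l)_{B_l}} S, where B_l = {R_l in E},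
   (nu_l)_{B_l} = nu_l(B_l cap .)/nu_l(B_l), so that
   int f d((nu_l)_{B_l} o S_l^{-1}) = (int_{B_l} f(S_l) dnu_l) / nu_l(B_l). *)
Definition weak_conv_law_cond (R : realType) d (X : measurableType d)
  d' (Om : measurableType d') (T : topologicalType)
  (nu : nat -> probability X R) (B : nat -> set X) (S : nat -> X -> T)
  (P : probability Om R) (S0 : Om -> T) : Prop :=
  forall f : T -> R, bounded_continuous f ->
    (fun l => (\int[nu l]_(x in B l) (f (S l x))%:E / nu l (B l))%E) @ \oo -->
      (\int[P]_w (f (S0 w))%:E)%E.

From HB Require Import structures.
From mathcomp Require Import all_boot all_order all_algebra.
From mathcomp Require Import all_classical all_reals all_analysis.
From mathcomp Require Import lra measurable_realfun.
Import Order.TTheory GRing.Theory Num.Theory.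
Import numFieldNormedType.Exports.
Local Open Scope classical_set_scope.
Local Open Scope ring_scope.

(* Write M(phi, psi) for E[phi(R) psi(R')] and M_l(phi, psi) for the same quantity under
   nu_l.  Joint weak convergence gives M_l(phi, psi) --> M(phi, psi) for continuous phi
   and psi; when P(R in boundary A) = 0, sandwiching 1_A between continuous functions
   increasing to the indicator of the interior of A and decreasing to the indicator of its
   closure extends this to phi = 1_A.  For A in the pi-system, M_l(1_A, g) / M_l(1_A, 1)
   is the mean of g(R'_l) under the conditioned measure, so it tends to E[g(R')], while
   M_l(1_A, 1) tends to P(R in A); hence E[1_A(R) g(R')] = P(R in A) E[g(R')] for every
   continuous g with values in [0, 1].  Letting g decrease to the indicator of a closed set
   gives the product rule for A in the pi-system and B closed, and two pi-lambda arguments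
   extend it to all Borel A and B. *)

Section continuous_approximation.
Context {R : realType} {T : pseudoMetricType R}.
Implicit Types (A C U : set T) (x y : T) (k : nat).

Definition trunc_dist C x : R := fine (mine (edist_inf C x) 1%:E).

Lemma trunc_distE C x : mine (edist_inf C x) 1%:E = (trunc_dist C x)%:E.
Proof.
rewrite /trunc_dist fineK // ge0_fin_numE; last by rewrite le_min lee01 andbT edist_inf_ge0.
by apply: le_lt_trans (ltry 1); rewrite ge_min lexx orbT.
Qed.

Lemma trunc_dist_ge0 C x : 0 <= trunc_dist C x.
Proof. by rewrite -lee_fin -trunc_distE le_min lee01 andbT edist_inf_ge0. Qed.

Lemma trunc_dist0 C x : C x -> trunc_dist C x = 0.
Proof. by move=> Cx; rewrite /trunc_dist edist_inf0 // min_l ?lee01. Qed.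

Lemma trunc_dist_gt0 {C x} : closed C -> ~ C x -> 0 < trunc_dist C x.
Proof.
move=> cC nCx; have /nbhs_ballP[r /= r0 rC] : nbhs x (~` C).
  by apply: open_nbhs_nbhs; split => //; exact: closed_openC.
have rle : (r%:E <= edist_inf C x)%E.
  apply/ereal_infP => _ [a Ca <-]; rewrite leNgt; apply/negP.
  by move=> /edist_lt_ball /rC.
have : ((Num.min r 1)%:E <= (trunc_dist C x)%:E)%E.
  by rewrite -trunc_distE EFin_min; exact: le_min2.
by rewrite lee_fin; apply: lt_le_trans; rewrite lt_min r0 ltr01.
Qed.

Lemma fine_min1_le (a b : \bar R) (r : R) : 0 <= r -> (0 <= a)%E -> (0 <= b)%E ->
  (a <= r%:E + b)%E -> fine (mine a 1%:E) <= r + fine (mine b 1%:E).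
Proof.
move=> r0; case: a => [a||] //; case: b => [b||] //= a0 b0; rewrite ?lee_fin => h;
  rewrite -?EFin_min /=.
all: try (have [h1|h1] := leP a 1; rewrite ?(min_l h1) ?(min_r (ltW h1)));
     try (have [h2|h2] := leP b 1; rewrite ?(min_l h2) ?(min_r (ltW h2))); lra.
Qed.

Lemma trunc_dist_ball C x y e : 0 < e -> ball x e y ->
  `|trunc_dist C x - trunc_dist C y| <= e.
Proof.
move=> e0 bxy; have exy : (edist (x, y) <= e%:E)%E by exact: edist_fin.
have step u v : (edist (u, v) <= e%:E)%E -> trunc_dist C u <= e + trunc_dist C v.
  move=> euv; apply: fine_min1_le; rewrite ?edist_inf_ge0 ?(ltW e0) //.
  exact: le_trans (edist_inf_triangle C u v) (leeD2r _ euv).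
have := step x y exy; have := step y x; rewrite edist_sym => /(_ exy).
by rewrite ler_norml => ? ?; apply/andP; split; lra.
Qed.

Lemma continuous_trunc_dist C : continuous (trunc_dist C).
Proof.
move=> x; apply/cvgrPdist_le => e e0; near=> y.
by apply: trunc_dist_ball => //; near: y; exact: nbhsx_ballx.
Unshelve. all: by end_near. Qed.

Definition approx_indic C k x : R :=
  Num.max 0 (1 - k.+1%:R * trunc_dist C x).

Lemma approx_indic01 C k x : 0 <= approx_indic C k x <= 1.
Proof.
rewrite /approx_indic le_max lexx ge_max ler01 /= lerBlDr lerDl.
by rewrite mulr_ge0 // trunc_dist_ge0.
Qed.

Lemma approx_indic1 C k x : C x -> approx_indic C k x = 1.
Proof. by move=> Cx; rewrite /approx_indic trunc_dist0 // mulr0 subr0 max_r. Qed.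

Lemma continuous_approx_indic C k : continuous (approx_indic C k).
Proof.
move=> x; apply: (@continuous_max _ _ (cst 0) (fun x => 1 - _ * trunc_dist C x)).
  exact: cvg_cst.
by apply: continuousB; [exact: cvg_cst|apply: continuousM;
  [exact: cvg_cst|exact: continuous_trunc_dist]].
Qed.

Lemma cvg_approx_indic C x : closed C ->
  approx_indic C ^~ x @ \oo --> (\1_C x : R).
Proof.
move=> cC; apply: cvg_near_cst; have [Cx|nCx] := pselect (C x).
  by near=> k; rewrite indicE mem_set // approx_indic1.
have d0 := trunc_dist_gt0 cC nCx.
near=> k; rewrite indicE memNset // /approx_indic max_l // subr_le0.
rewrite -ler_pdivrMr // mul1r ltW //; near: k.
apply: filterS (nbhs_infty_gtr (trunc_dist C x)^-1) => k /lt_le_trans; apply.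
by rewrite ler_nat.
Unshelve. all: by end_near. Qed.

Lemma indic_le_approx_indic A C k x : A `<=` C -> \1_A x <= approx_indic C k x.
Proof.
move=> AC; rewrite indicE; have [Ax|nAx] := pselect (A x).
  by rewrite mem_set // approx_indic1 //; exact: AC.
by rewrite memNset // (andP (approx_indic01 C k x)).1.
Qed.

Definition approx_open U k x : R := 1 - approx_indic (~` U) k x.

Lemma approx_open01 U k x : 0 <= approx_open U k x <= 1.
Proof.
have /andP[? ?] := approx_indic01 (~` U) k x.
by rewrite /approx_open; apply/andP; split; lra.
Qed.

Lemma continuous_approx_open U k : continuous (approx_open U k).
Proof.
by move=> x; apply: continuousB; [exact: cvg_cst|exact: continuous_approx_indic].
Qed.

Lemma approx_open_le_indic U A k x : U `<=` A -> approx_open U k x <= \1_A x.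
Proof.
move=> UA; have /andP[_ le1] := approx_open01 U k x.
rewrite indicE; have [Ux|nUx] := pselect (U x); first by rewrite mem_set //; exact: UA.
by rewrite /approx_open approx_indic1 // subrr; case: (x \in A).
Qed.

Lemma cvg_approx_open U x : open U -> approx_open U ^~ x @ \oo --> (\1_U x : R).
Proof.
move=> oU; have -> : \1_U x = 1 - \1_(~` U) x :> R.
  by rewrite indicC indicE; case: (x \in U); rewrite ?subr0 ?subrr.
by apply: cvgB; [exact: cvg_cst|apply: cvg_approx_indic; exact: open_closedC].
Qed.

End continuous_approximation.

Section Borel_sets.
Context {T : topologicalType}.
Implicit Types A B U : set T.

Lemma Borel_open {U} : open U -> Borel U.
Proof. exact: sub_sigma_algebra. Qed.

Lemma Borel_set0 : Borel (@set0 T).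
Proof. by have [] := smallest_sigma_algebra [set: T] open. Qed.

Lemma Borel_setC A : Borel A -> Borel (~` A).
Proof.
have [_ BorelD _] := smallest_sigma_algebra [set: T] open.
by move=> BA; rewrite -setTD; exact: BorelD.
Qed.

Lemma Borel_setT : Borel [set: T].
Proof. exact: Borel_open openT. Qed.

Lemma Borel_closed {A} : closed A -> Borel A.
Proof.
by move=> cA; rewrite -(setCK A); apply: Borel_setC; apply: Borel_open; exact: closed_openC.
Qed.

Lemma Borel_setI A B : Borel A -> Borel B -> Borel (A `&` B).
Proof.
move=> BA BB; rewrite -(setCK (A `&` B)) setCI -bigcup2E; apply: Borel_setC.
have [_ _ BorelU] := smallest_sigma_algebra [set: T] open.
by apply: BorelU => -[|[|n]] /=; [exact: Borel_setC|exact: Borel_setC|exact: Borel_set0].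
Qed.

Lemma Borel_boundary A : Borel (boundary A).
Proof.
apply: Borel_setI; apply: Borel_closed; first exact: closed_closure.
by apply: open_closedC; exact: open_interior.
Qed.

Lemma Borel_sub_sigma_closed : @Borel T `<=` <<s [set: T], closed >>.
Proof.
apply: smallest_sub; first exact: smallest_sigma_algebra.
move=> U oU; rewrite -(setCK U) -setTD.
have [_ sigmaD _] := smallest_sigma_algebra [set: T] closed.
by apply: sigmaD; apply: sub_sigma_algebra; exact: open_closedC.
Qed.

End Borel_sets.

Section Borel_test_functions.
Context {R : realType} {T : topologicalType}.
Implicit Types phi : T -> R.

Definition borel01 phi :=
  (forall U : set R, open U -> Borel (phi @^-1` U)) /\ forall x, 0 <= phi x <= 1.

Lemma borel01_continuous {phi} : continuous phi -> (forall x, 0 <= phi x <= 1) ->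
  borel01 phi.
Proof.
by move=> cphi phi01; split=> // U oU; apply: Borel_open; exact: (continuousP _).1.
Qed.

Lemma borel01_indic {A} : Borel A -> borel01 (\1_A : T -> R).
Proof.
move=> BA; split=> [U _|x]; last by rewrite indicE; case: (x \in A); rewrite ?lexx ?ler01.
rewrite preimage_indic; case: ifP => _; case: ifP => _ //.
- exact: Borel_setT.
- exact: Borel_setC.
- exact: Borel_set0.
Qed.

Lemma borel01_cst1 : borel01 (cst 1 : T -> R).
Proof. by rewrite -indicT; exact: borel01_indic Borel_setT. Qed.

Lemma measurable_borel01_comp {d} {Y : measurableType d} {S : Y -> T} {phi} :
  borel_map S -> borel01 phi -> measurable_fun setT (phi \o S).
Proof.
move=> mS [phiB _]; apply: (measurability _ (RGenOpens.measurableE R)).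
move=> _ [_ [a [b ->] <-]]; rewrite setTI comp_preimage.
by apply: mS; apply: phiB; exact: interval_open.
Qed.

End Borel_test_functions.

Section mixed_moment.
Context {R : realType} {d : measure_display} {Y : measurableType d}
  (mu : probability Y R) {E E' : topologicalType} (S : Y -> E) (S' : Y -> E').
Implicit Types (phi : E -> R) (psi : E' -> R).

Definition mixed_moment phi psi := (\int[mu]_y (phi (S y) * psi (S' y))%:E)%E.

Hypotheses (mS : borel_map S) (mS' : borel_map S').

Lemma mixed_integrand01 {phi psi} x x' : borel01 phi -> borel01 psi ->
  0 <= phi x * psi x' <= 1.
Proof.
move=> [_ /(_ x)/andP[phi0 phi1]] [_ /(_ x')/andP[psi0 psi1]].
by rewrite mulr_ge0 // mulr_ile1.
Qed.

Lemma measurable_mixed_integrand {phi psi} : borel01 phi -> borel01 psi ->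
  measurable_fun setT (fun y => (phi (S y) * psi (S' y))%:E).
Proof.
move=> Bphi Bpsi; apply/measurable_EFinP.
have mphi := measurable_borel01_comp mS Bphi.
by have := measurable_borel01_comp mS' Bpsi; exact: measurable_funM.
Qed.

Lemma mixed_moment_ge0 {phi psi} : borel01 phi -> borel01 psi ->
  (0 <= mixed_moment phi psi)%E.
Proof.
move=> Bphi Bpsi; apply: integral_ge0 => y _; rewrite lee_fin.
by case/andP: (mixed_integrand01 (S y) (S' y) Bphi Bpsi).
Qed.

Lemma mixed_moment_le1 {phi psi} : borel01 phi -> borel01 psi ->
  (mixed_moment phi psi <= 1)%E.
Proof.
move=> Bphi Bpsi; apply: (@le_trans _ _ (\int[mu]_y (cst 1%:E) y)%E).
  apply: ge0_le_integral => //; try exact: measurable_mixed_integrand;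
    by move=> y _; rewrite lee_fin; case/andP: (mixed_integrand01 (S y) (S' y) Bphi Bpsi).
by rewrite integral_cst // mul1e probability_le1.
Qed.

Lemma mixed_moment_fin {phi psi} : borel01 phi -> borel01 psi ->
  mixed_moment phi psi \is a fin_num.
Proof.
move=> Bphi Bpsi; rewrite ge0_fin_numE ?mixed_moment_ge0 //.
exact: le_lt_trans (mixed_moment_le1 Bphi Bpsi) (ltry 1).
Qed.

Lemma mixed_moment_indic {A B} : Borel A -> Borel B ->
  mixed_moment \1_A \1_B = mu (S @^-1` A `&` S' @^-1` B).
Proof.
move=> BA BB; have mAB : measurable (S @^-1` A `&` S' @^-1` B).
  by apply: measurableI; [exact: mS|exact: mS'].
rewrite -(setIT (_ `&` _)) -integral_indic //.
by apply: eq_integral => y _; rewrite indicI /= !indicE.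
Qed.

Lemma mixed_moment_indic_cst1 {A} : Borel A -> mixed_moment \1_A (cst 1) = mu (S @^-1` A).
Proof.
by move=> BA; rewrite -indicT mixed_moment_indic ?preimage_setT ?setIT //; exact: Borel_setT.
Qed.

Lemma mixed_moment_cst1_indic {B} : Borel B -> mixed_moment (cst 1) \1_B = mu (S' @^-1` B).
Proof.
by move=> BB; rewrite -indicT mixed_moment_indic ?preimage_setT ?setTI //; exact: Borel_setT.
Qed.

Lemma le_mixed_moment phi1 phi2 psi1 psi2 :
  borel01 phi1 -> borel01 phi2 -> borel01 psi1 -> borel01 psi2 ->
  (forall x, phi1 x <= phi2 x) -> (forall x', psi1 x' <= psi2 x') ->
  (mixed_moment phi1 psi1 <= mixed_moment phi2 psi2)%E.
Proof.
move=> Bphi1 Bphi2 Bpsi1 Bpsi2 phi12 psi12.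
apply: ge0_le_integral => //; try exact: measurable_mixed_integrand.
  by move=> y _; rewrite lee_fin; case/andP: (mixed_integrand01 (S y) (S' y) Bphi1 Bpsi1).
move=> y _; rewrite lee_fin; apply: ler_pM => //.
  by case: Bphi1 => _ /(_ (S y))/andP[].
by case: Bpsi1 => _ /(_ (S' y))/andP[].
Qed.

Lemma cvg_mixed_moment {phi_ : nat -> E -> R} {psi_ : nat -> E' -> R} {phi psi} :
  (forall k, borel01 (phi_ k)) -> (forall k, borel01 (psi_ k)) ->
  (forall x, phi_ ^~ x @ \oo --> phi x) -> (forall x', psi_ ^~ x' @ \oo --> psi x') ->
  (fun k => mixed_moment (phi_ k) (psi_ k)) @ \oo --> mixed_moment phi psi.
Proof.
move=> Bphi_ Bpsi_ phi_cvg psi_cvg.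
apply: (@dominated_cvg _ _ _ mu setT measurableT _ _ (cst 1%:E)) => //.
- by move=> k; exact: measurable_mixed_integrand.
- move=> y _; apply: cvg_EFin; first exact: nearW.
  exact: cvgM (phi_cvg (S y)) (psi_cvg (S' y)).
- exact: finite_measure_integrable_cst.
- move=> k y _ /=; rewrite lee_fin ger0_norm;
    by case/andP: (mixed_integrand01 (S y) (S' y) (Bphi_ k) (Bpsi_ k)).
Qed.

Lemma mixed_moment_ae {phi1 phi2 psi} {N : set E} :
  borel01 phi1 -> borel01 phi2 -> borel01 psi ->
  Borel N -> mu (S @^-1` N) = 0%E -> (forall x, ~ N x -> phi1 x = phi2 x) ->
  mixed_moment phi1 psi = mixed_moment phi2 psi.
Proof.
move=> Bphi1 Bphi2 Bpsi BN N0 phi12; apply: ae_eq_integral => //;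
  try exact: measurable_mixed_integrand.
exists (S @^-1` N); split => //; first exact: mS.
by move=> y /= neq; apply: contrapT => nN; apply: neq => _; rewrite phi12.
Qed.

Lemma mixed_moment_indicl {A psi} :
  mixed_moment \1_A psi = (\int[mu]_(y in S @^-1` A) (psi (S' y))%:E)%E.
Proof.
rewrite integral_mkcond; apply: eq_integral => y _.
rewrite patchE indicE (_ : (y \in S @^-1` A) = (S y \in A)) //.
by case: (S y \in A); rewrite ?mul1r ?mul0r.
Qed.

Lemma mixed_moment_indic_boundary {A B psi} : Borel A -> Borel B -> borel01 psi ->
  mu (S @^-1` boundary A) = 0%E -> interior A `<=` B -> B `<=` closure A ->
  mixed_moment \1_B psi = mixed_moment \1_A psi.
Proof.
move=> BA BB Bpsi A0 AB BA'.
apply: (mixed_moment_ae (borel01_indic BB) (borel01_indic BA) Bpsi (Borel_boundary A)) => //.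
move=> x nbx; rewrite !indicE; have [Ax|nAx] := pselect (A x).
  rewrite (mem_set Ax) mem_set //; apply: AB; apply: contrapT => nAx.
  by apply: nbx; split => //; exact: subset_closure.
rewrite (memNset nAx) memNset // => Bx; apply: nbx; split; first exact: BA'.
by move=> /interior_subset.
Qed.

End mixed_moment.

Lemma cvgr_sandwich {R : realType} (u : R^nat) (lo up : nat -> R^nat)
    (Lo Up : R^nat) (a : R) :
  (forall k l, lo k l <= u l <= up k l) ->
  (forall k, lo k @ \oo --> Lo k) -> (forall k, up k @ \oo --> Up k) ->
  Lo @ \oo --> a -> Up @ \oo --> a -> u @ \oo --> a.
Proof.
move=> lo_u_up lo_cvg up_cvg Lo_cvg Up_cvg; apply/cvgrPdist_le => e e0.
have e2 : 0 < e / 2 by rewrite divr_gt0.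
have [k [/= Lok Upk]] : exists k, `|a - Lo k| <= e / 2 /\ `|a - Up k| <= e / 2.
  apply: (@filter_ex _ \oo); apply: filterI.
    exact: (cvgrPdist_le _ _).1 Lo_cvg _ e2.
  exact: (cvgrPdist_le _ _).1 Up_cvg _ e2.
move/cvgrPdist_le/(_ _ e2) : (lo_cvg k) => lo_near.
move/cvgrPdist_le/(_ _ e2) : (up_cvg k) => up_near.
near=> l; have /andP[lo_u u_up] := lo_u_up k l.
have : `|Lo k - lo k l| <= e / 2 by near: l.
have : `|Up k - up k l| <= e / 2 by near: l.
move: Lok Upk; rewrite !ler_norml => /andP[? ?] /andP[? ?] /andP[? ?] /andP[? ?].
by apply/andP; split; lra.
Unshelve. all: by end_near. Qed.

Lemma cvge_sandwich {R : realType} (u : (\bar R)^nat) (lo up : nat -> (\bar R)^nat)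
    (Lo Up : (\bar R)^nat) (a : R) :
  (forall l, u l \is a fin_num) ->
  (forall k l, lo k l \is a fin_num) -> (forall k l, up k l \is a fin_num) ->
  (forall k, Lo k \is a fin_num) -> (forall k, Up k \is a fin_num) ->
  (forall k l, (lo k l <= u l <= up k l)%E) ->
  (forall k, lo k @ \oo --> Lo k) -> (forall k, up k @ \oo --> Up k) ->
  Lo @ \oo --> a%:E -> Up @ \oo --> a%:E -> u @ \oo --> a%:E.
Proof.
move=> ufin lofin upfin Lofin Upfin lo_u_up lo_cvg up_cvg Lo_cvg Up_cvg.
apply/fine_cvgP; split; first exact: nearW.
apply: (@cvgr_sandwich _ _ (fun k => fine \o lo k) (fun k => fine \o up k)
  (fine \o Lo) (fine \o Up)).
- move=> k l; have /andP[lo_u u_up] := lo_u_up k l.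
  by rewrite /= !fine_le.
- by move=> k; apply: fine_cvg; rewrite fineK.
- by move=> k; apply: fine_cvg; rewrite fineK.
- exact: fine_cvg.
- exact: fine_cvg.
Qed.

Lemma cvge_mul_div {R : realType} {u v : (\bar R)^nat} {b c : \bar R} :
  b \is a fin_num -> b != 0%E -> c \is a fin_num ->
  (fun l => u l / v l)%E @ \oo --> c -> v @ \oo --> b -> u @ \oo --> (c * b)%E.
Proof.
move=> bfin b0 cfin uv_cvg v_cvg.
apply: cvg_trans (cvgeM (mule_def_fin cfin bfin) uv_cvg v_cvg) => //.
move: v_cvg; rewrite -(fineK bfin) => /fine_cvgP[vfin].
have b0' : fine b != 0 by rewrite fine_eq0.
move=> /cvgr_neq0/(_ b0') vneq0; apply: near_eq_cvg; near=> l.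
have vlfin : v l \is a fin_num by near: l.
have vl0 : fine (v l) != 0 by near: l.
by rewrite /= -(fineK vlfin) inver (negbTE vl0) -muleA -EFinM mulVf // mule1.
Unshelve. all: by end_near. Qed.

Section product_rule.
Context {R : realType} {d : measure_display} {Y : measurableType d}
  (mu : probability Y R) {T : Type} (S : Y -> T) (a : set Y).
Hypothesis ma : measurable a.

Definition product_rule_sets : set (set T) := [set B | measurable (S @^-1` B) /\
  mu (a `&` S @^-1` B) = (mu a * mu (S @^-1` B))%E].

Lemma lambda_system_product_rule_sets : lambda_system setT product_rule_sets.
Proof.
have mufin X : measurable X -> mu X \is a fin_num := fin_num_measure mu X.
split => //.
- by rewrite /product_rule_sets /= preimage_setT setIT probability_setT mule1.
- move=> A B BA [mA eA] [mB eB]; rewrite /product_rule_sets /=.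
  have -> : S @^-1` (A `\` B) = S @^-1` A `\` S @^-1` B by [].
  split; first exact: measurableD.
  have sBA := @preimage_subset _ _ S _ _ BA.
  have maA := measurableI _ _ ma mA.
  rewrite setIDA measureD // ?ltey_eq ?mufin // -setIA (setIidr sBA).
  rewrite [X in (X - _)%E]eA [X in (_ - X)%E]eB.
  rewrite measureD // ?ltey_eq ?mufin // (setIidr sBA) muleBr ?mufin //.
  by rewrite fin_num_adde_defl // fin_numN mufin.
- move=> F ndF FP; have mF n : measurable (S @^-1` F n) by case: (FP n).
  rewrite /product_rule_sets /= preimage_bigcup setI_bigcupr.
  split; first exact: bigcupT_measurable.
  have ndSF : nondecreasing_seq (fun n => S @^-1` F n).
    by move=> m n mn; apply/subsetPset => x; move/subsetPset: (ndF m n mn); apply.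
  have ndaSF : nondecreasing_seq (fun n => a `&` S @^-1` F n).
    by move=> m n mn; apply/subsetPset; apply: setIS; exact/subsetPset/ndSF.
  have maSF n : measurable (a `&` S @^-1` F n) by exact: measurableI.
  have cvg_aSF := nondecreasing_cvg_mu (mu := mu) maSF (bigcupT_measurable _ maSF) ndaSF.
  have cvg_SF := nondecreasing_cvg_mu (mu := mu) mF (bigcupT_measurable _ mF) ndSF.
  have cvg_aSF_prod : mu \o (fun n => a `&` S @^-1` F n) @ \oo -->
      (mu a * mu (\bigcup_n S @^-1` F n))%E.
    by under eq_cvg do rewrite /= (FP _).2; exact: cvgeZl (mufin _ ma) cvg_SF.
  exact: cvg_unique _ cvg_aSF cvg_aSF_prod.
Qed.

Lemma product_rule_sigma (K : set (set T)) : setI_closed K ->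
  K `<=` product_rule_sets -> <<s [set: T], K >> `<=` product_rule_sets.
Proof.
move=> KI KP; apply: lambda_system_subset => //.
exact: lambda_system_product_rule_sets.
Qed.

End product_rule.

Section mixed_moment_limits.
Context {R : realType} {d : measure_display} {X : measurableType d}
  {d' : measure_display} {Om : measurableType d'} {E E' : pseudoMetricType R}
  {nu : nat -> probability X R} {Rl : nat -> X -> E} {Rl' : nat -> X -> E'}
  {P : probability Om R} {R0 : Om -> E} {R0' : Om -> E'}.
Hypotheses (mRl : forall l, borel_map (Rl l)) (mRl' : forall l, borel_map (Rl' l))
  (mR0 : borel_map R0) (mR0' : borel_map R0').
Hypothesis joint_cvg : weak_conv_law nu (fun l x => (Rl l x, Rl' l x)) P
  (fun w => (R0 w, R0' w)).

Local Notation M_ l := (mixed_moment (nu l) (Rl l) (Rl' l)).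
Local Notation M := (mixed_moment P R0 R0').

Let M_fin_ l {phi : E -> R} {psi : E' -> R} : borel01 phi -> borel01 psi ->
  M_ l phi psi \is a fin_num.
Proof. exact: (mixed_moment_fin _ _ _ (mRl l) (mRl' l)). Qed.

Let M_fin {phi : E -> R} {psi : E' -> R} : borel01 phi -> borel01 psi ->
  M phi psi \is a fin_num.
Proof. exact: (mixed_moment_fin _ _ _ mR0 mR0'). Qed.

Lemma cvg_mixed_moment_continuous {phi : E -> R} {psi : E' -> R} :
  continuous phi -> continuous psi ->
  (forall x, 0 <= phi x <= 1) -> (forall x', 0 <= psi x' <= 1) ->
  (fun l => M_ l phi psi) @ \oo --> M phi psi.
Proof.
move=> cphi cpsi phi01 psi01; apply: (joint_cvg (fun p => phi p.1 * psi p.2)); split.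
  move=> [x x']; apply: continuousM.
    by apply: (continuous_comp (f := fst)); [exact: cvg_fst|exact: cphi].
  by apply: (continuous_comp (f := snd)); [exact: cvg_snd|exact: cpsi].
exists 1 => -[x x'] /=; rewrite ger0_norm;
  by case/andP: (mixed_integrand01 x x' (borel01_continuous cphi phi01)
                                      (borel01_continuous cpsi psi01)).
Qed.

Lemma cvg_mixed_moment_indic {A : set E} {g : E' -> R} : Borel A ->
  P (R0 @^-1` boundary A) = 0%E -> continuous g -> (forall x', 0 <= g x' <= 1) ->
  (fun l => M_ l \1_A g) @ \oo --> M \1_A g.
Proof.
move=> BA A0 cg g01; have Bg := borel01_continuous cg g01.
have BA1 : borel01 (\1_A : E -> R) := borel01_indic BA.
pose U : set E := interior A; pose C : set E := closure A.
have [oU cC] : open U /\ closed C by split; [exact: open_interior|exact: closed_closure].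
have [UA AC] : U `<=` A /\ A `<=` C by split; [exact: interior_subset|exact: subset_closure].
have Blo k := borel01_continuous (continuous_approx_open U k) (approx_open01 U k).
have Bup k := borel01_continuous (continuous_approx_indic C k) (approx_indic01 C k).
have M_bd (B : set E) : Borel B -> U `<=` B -> B `<=` C -> M \1_B g = M \1_A g.
  by move=> BB UB BC; apply: (mixed_moment_indic_boundary P _ _ mR0 mR0' BA BB Bg A0 UB BC).
rewrite -(fineK (M_fin BA1 Bg)).
apply: (@cvge_sandwich _ _ (fun k l => M_ l (approx_open U k) g)
  (fun k l => M_ l (approx_indic C k) g) (fun k => M (approx_open U k) g)
  (fun k => M (approx_indic C k) g)); try by move=> *; exact: M_fin_ || exact: M_fin.
- move=> k l; rewrite !le_mixed_moment // => x.
    exact: indic_le_approx_indic.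
  exact: approx_open_le_indic.
- move=> k; exact: cvg_mixed_moment_continuous (continuous_approx_open U k) cg
    (approx_open01 U k) g01.
- move=> k; exact: cvg_mixed_moment_continuous (continuous_approx_indic C k) cg
    (approx_indic01 C k) g01.
- rewrite fineK ?M_fin // -(M_bd U (Borel_open oU) (@subset_refl _ U) (subset_trans UA AC)).
  apply: (cvg_mixed_moment _ _ _ mR0 mR0' Blo (fun=> Bg)) => [x|x']; last exact: cvg_cst.
  exact: cvg_approx_open.
- rewrite fineK ?M_fin // -(M_bd C (Borel_closed cC) (subset_trans UA AC) (@subset_refl _ C)).
  apply: (cvg_mixed_moment _ _ _ mR0 mR0' Bup (fun=> Bg)) => [x|x']; last exact: cvg_cst.
  exact: cvg_approx_indic.
Qed.

Section regular_set.
Context {A : set E}.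
Hypotheses (BA : Borel A) (A0 : P (R0 @^-1` boundary A) = 0%E)
  (A_cond : (0 < P (R0 @^-1` A))%E ->
     weak_conv_law_cond nu (fun l => Rl l @^-1` A) Rl' P R0').

Lemma cvg_mixed_moment_ratio {g : E' -> R} : (0 < P (R0 @^-1` A))%E ->
  continuous g -> (forall x', 0 <= g x' <= 1) ->
  (fun l => M_ l \1_A g / M_ l \1_A (cst 1%R))%E @ \oo --> M (cst 1%R) g.
Proof.
move=> PApos cg g01; have gbc : bounded_continuous g.
  by split => //; exists 1 => x'; case/andP: (g01 x') => g0 g1; rewrite ger0_norm.
rewrite (_ : M (cst 1%R) g = \int[P]_w (g (R0' w))%:E)%E; last first.
  by apply: eq_integral => w _; rewrite mul1r.
under eq_cvg do rewrite mixed_moment_indicl (mixed_moment_indic_cst1 _ _ _ (mRl _) (mRl' _) BA).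
exact: A_cond PApos g gbc.
Qed.

Lemma mixed_moment_indic_factor {g : E' -> R} :
  continuous g -> (forall x', 0 <= g x' <= 1) ->
  M \1_A g = (P (R0 @^-1` A) * M (cst 1%R) g)%E.
Proof.
move=> cg g01; have Bg := borel01_continuous cg g01.
have BA1 : borel01 (\1_A : E -> R) := borel01_indic BA.
have [PA0|PAneq0] := eqVneq (P (R0 @^-1` A)) 0%E.
  rewrite PA0 mul0e; apply/eqP; rewrite eq_le mixed_moment_ge0 ?andbT //.
  rewrite -PA0 -(mixed_moment_indic_cst1 P _ _ mR0 mR0' BA).
  apply: le_mixed_moment => //; first exact: borel01_cst1.
  by move=> x'; case/andP: (g01 x').
have PApos : (0 < P (R0 @^-1` A))%E by rewrite lt0e PAneq0 measure_ge0.
have PAfin : P (R0 @^-1` A) \is a fin_num by exact: fin_num_measure (mR0 _ BA).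
have nuA_cvg : (fun l => M_ l \1_A (cst 1%R)) @ \oo --> P (R0 @^-1` A).
  rewrite -(mixed_moment_indic_cst1 P _ _ mR0 mR0' BA).
  apply: cvg_mixed_moment_indic BA A0 _ _ => [x'|x']; first exact: cvg_cst.
  by rewrite ler01 lexx.
have := cvge_mul_div PAfin PAneq0 (M_fin borel01_cst1 Bg)
  (cvg_mixed_moment_ratio PApos cg g01) nuA_cvg.
by rewrite muleC; exact: cvg_unique _ (cvg_mixed_moment_indic BA A0 cg g01).
Qed.

Lemma product_rule_closed {B : set E'} : closed B ->
  P (R0 @^-1` A `&` R0' @^-1` B) = (P (R0 @^-1` A) * P (R0' @^-1` B))%E.
Proof.
move=> cB; have BB := Borel_closed cB.
rewrite -(mixed_moment_indic P _ _ mR0 mR0' BA BB).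
rewrite -(mixed_moment_cst1_indic P _ _ mR0 mR0' BB).
have Bup k := borel01_continuous (continuous_approx_indic B k) (approx_indic01 B k).
have approx_cvg (phi : E -> R) : borel01 phi ->
    (fun k => M phi (approx_indic B k)) @ \oo --> M phi \1_B.
  move=> Bphi; apply: (cvg_mixed_moment _ _ _ mR0 mR0' (fun=> Bphi) Bup) => [x|x'].
    exact: cvg_cst.
  exact: cvg_approx_indic.
have PAfin : P (R0 @^-1` A) \is a fin_num by exact: fin_num_measure (mR0 _ BA).
have := cvgeZl PAfin (approx_cvg _ borel01_cst1).
under eq_cvg do rewrite -(mixed_moment_indic_factor (continuous_approx_indic B _)
  (approx_indic01 B _)).
exact: cvg_unique _ (approx_cvg _ (borel01_indic BA)).
Qed.

End regular_set.

End mixed_moment_limits.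

Theorem mainTheorem11 (R : realType) (d : measure_display) (X : measurableType d)
  (d' : measure_display) (Om : measurableType d')
  (E E' : pseudoMetricType R)
  (hE : hausdorff_space E) (cE : compact [set: E])
  (hE' : hausdorff_space E') (cE' : compact [set: E'])
  (nu : nat -> probability X R)
  (Rl : nat -> X -> E) (Rl' : nat -> X -> E')
  (mRl : forall l, borel_map (Rl l)) (mRl' : forall l, borel_map (Rl' l))
  (P : probability Om R) (R0 : Om -> E) (R0' : Om -> E')
  (mR0 : borel_map R0) (mR0' : borel_map R0')
  (Hjoint : weak_conv_law nu (fun l x => (Rl l x, Rl' l x)) P
              (fun w => (R0 w, R0' w)))
  (G : set (set E)) (HGpi : setI_closed G)
  (HGgen : <<s [set: E], G >> = @Borel E)
  (HG : forall A, G A ->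
     P (R0 @^-1` boundary A) = 0%E /\
     ((0 < P (R0 @^-1` A))%E ->
        weak_conv_law_cond nu (fun l => Rl l @^-1` A) Rl' P R0')) :
  forall (A : set E) (B : set E'), Borel A -> Borel B ->
    P (R0 @^-1` A `&` R0' @^-1` B) = (P (R0 @^-1` A) * P (R0' @^-1` B))%E.
Proof.
have BorelG A : G A -> Borel A by rewrite -HGgen; exact: sub_sigma_algebra.
have rule_G_Borel A : G A -> forall B, Borel B ->
    P (R0 @^-1` A `&` R0' @^-1` B) = (P (R0 @^-1` A) * P (R0' @^-1` B))%E.
  move=> GA B /Borel_sub_sigma_closed sB; have [A0 Acond] := HG A GA.
  suff [] : product_rule_sets P R0' (R0 @^-1` A) B by [].
  apply: (product_rule_sigma _ _ _ (mR0 _ (BorelG A GA)) _ (@closedI _)) sB => C cC.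
  split; first by apply: mR0'; exact: Borel_closed.
  by apply: (product_rule_closed mRl mRl' mR0 mR0' Hjoint (BorelG A GA) A0 Acond cC).
move=> A B BA BB; rewrite setIC muleC.
suff [] : product_rule_sets P R0 (R0' @^-1` B) A by [].
apply: (product_rule_sigma _ _ _ (mR0' _ BB) _ HGpi); last by rewrite HGgen.
move=> C GC; split; first by apply: mR0; exact: BorelG.
by rewrite setIC muleC; exact: rule_G_Borel.
Qed.
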